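(* Let $j,i,j',i',j'',i''$ be nonnegative integers satisfying $i'-j=i''-j'=i-j''$. Then $u^{j,i,j',i',j'',i''}$ is invariant under the natural action of the dihedral group $D_6$ (the symmetry group of a hexagon) on its six arguments, viewed as placed cyclically in the order $(j,i,j',i',j'',i'')$ around a hexagon; i.e. $u^{j,i,j',i',j'',i''}=u^{j',i',j'',i'',j,i}$ (cyclic rotation by two places), $u^{j,i,j',i',j'',i''}=u^{i,j',i',j'',i'',j}$ (rotation by one place), and $u^{j,i,j',i',j'',i''}=u^{j'',i',j',i,j,i''}$ (a reflection), hence under all compositions of these.
   Context: $t$ is a formal variable, $\alpha_m=\prod_{r=1}^m(1-t^r)$ and $(x;t)_n=\prod_{s=0}^{n-1}(1-xt^s)$. For nonnegative integers $j,i,j',i',j'',i''$, \[u^{j,i,j',i',j'',i''}=\frac{\alpha_{i+j}}{\alpha_i\alpha_{i'}\alpha_{i''}\alpha_j\alpha_{j''}}\sum_{m=0}^{\min(i,i')}\frac{(t^{-i};t)_m\,(t^{-i'};t)_m}{(t;t)_m\,(t^{-(i+j)};t)_m}\,t^{m(i''+1)}\] (a terminating basic hypergeometric series ${}_2\phi_1$). Note the balance condition $i'-j=i''-j'=i-j''$ is itself preserved by the $D_6$ action. *)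

(* The formal variable t is 'X in the field Q(t) = {fraction {poly rat}}. *)
From HB Require Import structures.
From mathcomp Require Import all_boot all_order all_algebra fraction.
Set Implicit Arguments. Unset Strict Implicit. Unset Printing Implicit Defensive.
Import Order.TTheory GRing.Theory Num.Theory.
Local Open Scope ring_scope.

Definition Qt : fieldType := {fraction {poly rat}}.

Definition tq : Qt := FracField.tofrac ('X : {poly rat}).

Definition alpha (m : nat) : Qt := \prod_(1 <= r < m.+1) (1 - tq ^+ r).

Definition qpoch (x : Qt) (n : nat) : Qt := \prod_(s < n) (1 - x * tq ^+ s).

Definition u (j i j' i' j'' i'' : nat) : Qt :=
  alpha (i + j) / (alpha i * alpha i' * alpha i'' * alpha j * alpha j'') *
  \sum_(m < (minn i i').+1)
     (qpoch (tq ^- i) m * qpoch (tq ^- i') m)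
       / (qpoch tq m * qpoch (tq ^- (i + j)) m) * tq ^+ (m * (i'' + 1)).

(* Write (q)_n = (1 - q) ... (1 - q^n), so that alpha_n = (t)_n.  Evaluating the q-shifted
   factorials at negative powers of q turns u into a sum over m of
     (-1)^m q^(m j' + C(m+1,2)) [i+j-m choose j]_q / ((q)_m (q)_(i'-m) (q)_i'' (q)_j'').
   Since i + j - m = j'' + (i' - m), q-Vandermonde expands the q-binomial into a sum over k;
   after exchanging the sums, the q-binomial theorem sums over m, leaving
     u = sum of q^(k l) / ((q)_k (q)_l (q)_(j-k) (q)_(j'-k) (q)_(j''-k))
   over the pairs (k, l) with j - k = i' - l, j' - k = i'' - l, j'' - k = i - l >= 0.
   This form is manifestly D6-invariant: rotating the hexagon by one place exchanges k and l,
   and the reflection only permutes j, j', j''. *)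

From mathcomp Require Import all_boot all_order all_algebra fraction.
From mathcomp Require Import ring zify.
Set Implicit Arguments. Unset Strict Implicit. Unset Printing Implicit Defensive.
Import GRing.Theory.
Local Open Scope ring_scope.

Lemma sum_ord_widen0 (R : nmodType) n1 n2 (F : nat -> R) : (n1 <= n2)%N ->
  (forall k, (n1 <= k < n2)%N -> F k = 0) ->
  \sum_(k < n2) F k = \sum_(k < n1) F k.
Proof.
move=> le_n12 F0; rewrite (big_ord_widen n2 F le_n12) [RHS]big_mkcond /=.
by apply: eq_bigr => k _; case: ltnP => // ?; apply: F0; rewrite ltn_ord andbT.
Qed.

Section QCalculus.

Variables (F : fieldType) (q : F).

Definition qfact n : F := \prod_(1 <= r < n.+1) (1 - q ^+ r).

Definition qPochhammer (x : F) n : F := \prod_(s < n) (1 - x * q ^+ s).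

Definition qbinom n m : F :=
  if (m <= n)%N then qfact n / (qfact m * qfact (n - m)) else 0.

Lemma qfact0 : qfact 0 = 1.
Proof. by rewrite /qfact big_geq. Qed.

Lemma qfactS n : qfact n.+1 = qfact n * (1 - q ^+ n.+1).
Proof. by rewrite /qfact big_nat_recr. Qed.

Lemma qPochhammer0 x : qPochhammer x 0 = 1.
Proof. by rewrite /qPochhammer big_ord0. Qed.

Lemma qPochhammerS x n : qPochhammer x n.+1 = qPochhammer x n * (1 - x * q ^+ n).
Proof. by rewrite /qPochhammer big_ord_recr. Qed.

Lemma qPochhammer_q n : qPochhammer q n = qfact n.
Proof.
by elim: n => [|n IHn]; rewrite ?qPochhammer0 ?qfact0 // qPochhammerS qfactS IHn exprS.
Qed.

Lemma qPochhammer_qXS a b : qfact a * qPochhammer (q ^+ a.+1) b = qfact (a + b).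
Proof.
elim: b => [|b IHb]; first by rewrite qPochhammer0 mulr1 addn0.
by rewrite qPochhammerS addnS qfactS -IHb -exprD addSn mulrA.
Qed.

Lemma qPochhammer_eq0 x n s : (s < n)%N -> x * q ^+ s = 1 -> qPochhammer x n = 0.
Proof.
move=> lt_sn xqs1; rewrite /qPochhammer (bigD1 (Ordinal lt_sn)) //=.
by rewrite xqs1 subrr mul0r.
Qed.

Lemma qbinom_gt n m : (n < m)%N -> qbinom n m = 0.
Proof. by rewrite /qbinom ltnNge => /negbTE ->. Qed.

(* The [u] of the statement is [hexu tq]; [j'] does not occur, the balance condition
   determines it. *)
Definition hexu (j i j' i' j'' i'' : nat) : F :=
  qfact (i + j) / (qfact i * qfact i' * qfact i'' * qfact j * qfact j'') *
  \sum_(m < (minn i i').+1)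
     (qPochhammer (q ^- i) m * qPochhammer (q ^- i') m)
       / (qPochhammer q m * qPochhammer (q ^- (i + j)) m) * q ^+ (m * (i'' + 1)).

Definition hexu_coef j' i' i'' j'' m : F :=
  (-1) ^+ m * q ^+ (m * j' + 'C(m.+1, 2)) / (qfact m * qfact (i' - m) * qfact i'' * qfact j'').

Definition hexcoef j i j' i' j'' i'' k l : F :=
  if [&& k + i' == l + j, k + i'' == l + j', k + i == l + j''
       & k <= minn j (minn j' j'')]%N
  then q ^+ (k * l) / (qfact k * qfact l * qfact (j - k) * qfact (j' - k) * qfact (j'' - k))
  else 0.

Definition hexsum N j i j' i' j'' i'' : F :=
  \sum_(k < N) \sum_(l < N) hexcoef j i j' i' j'' i'' k l.

Lemma hexcoef_rot j i j' i' j'' i'' k l :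
  hexcoef i j' i' j'' i'' j k l = hexcoef j i j' i' j'' i'' l k.
Proof.
rewrite /hexcoef; have [/and4P[/eqP e1 /eqP e2 /eqP e3 le_k] | ] := boolP [&& _, _, _ & _].
  rewrite ifT; last by apply/and4P; split; lia.
  rewrite [(l * k)%N]mulnC (_ : (i - k = j'' - l)%N) 1?(_ : (i' - k = j - l)%N)
    1?(_ : (i'' - k = j' - l)%N); try lia.
  by congr (_ / _); ring.
move=> cond; rewrite ifF //; apply: (contraNF _ cond) => /and4P[/eqP ? /eqP ? /eqP ? ?].
by apply/and4P; split; lia.
Qed.

Lemma hexcoef_flip j i j' i' j'' i'' k l :
  hexcoef j'' i' j' i j i'' k l = hexcoef j i j' i' j'' i'' k l.
Proof.
rewrite /hexcoef.
have -> : [&& k + i == l + j'', k + i'' == l + j', k + i' == l + j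
            & k <= minn j'' (minn j' j)]%N =
          [&& k + i' == l + j, k + i'' == l + j', k + i == l + j''
            & k <= minn j (minn j' j'')]%N.
  by apply/and4P/and4P => -[/eqP ? /eqP ? /eqP ? ?]; split; try apply/eqP; lia.
by case: ifP => // _; congr (_ / _); ring.
Qed.

Lemma hexsum_rot N j i j' i' j'' i'' :
  hexsum N i j' i' j'' i'' j = hexsum N j i j' i' j'' i''.
Proof.
rewrite /hexsum exchange_big; apply: eq_bigr => l _; apply: eq_bigr => k _.
exact: hexcoef_rot.
Qed.

Lemma hexsum_flip N j i j' i' j'' i'' :
  hexsum N j'' i' j' i j i'' = hexsum N j i j' i' j'' i''.
Proof.
by apply: eq_bigr => k _; apply: eq_bigr => l _; apply: hexcoef_flip.
Qed.

Hypothesis q_neq0 : q != 0.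
Hypothesis qXn_neq1 : forall n, (0 < n)%N -> q ^+ n != 1.

Lemma expqzD a b : q ^ (a + b) = q ^ a * q ^ b.
Proof. exact: expfzDr. Qed.

Lemma expqz_neq0 z : q ^ z != 0.
Proof. exact: expfz_neq0. Qed.

Lemma subr1qXn_neq0 n : (0 < n)%N -> 1 - q ^+ n != 0.
Proof. by move=> n_gt0; rewrite subr_eq0 eq_sym qXn_neq1. Qed.

Lemma qfact_neq0 n : qfact n != 0.
Proof.
by elim: n => [|n IHn]; rewrite ?qfact0 ?oner_neq0 // qfactS mulf_neq0 ?subr1qXn_neq0.
Qed.

Lemma qbinom0 n : qbinom n 0 = 1.
Proof. by rewrite /qbinom subn0 qfact0 mul1r divff ?qfact_neq0. Qed.

Lemma qbinomnn n : qbinom n n = 1.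
Proof. by rewrite /qbinom leqnn subnn qfact0 mulr1 divff ?qfact_neq0. Qed.

Lemma qbinomSS n k :
  qbinom n.+1 k.+1 = q ^ (n%:Z - k%:Z) * qbinom n k + qbinom n k.+1.
Proof.
case: (ltngtP k n) => [lt_kn | lt_nk | ->]; last first.
- by rewrite !qbinomnn qbinom_gt // subrr mulr1 addr0.
- by rewrite !qbinom_gt ?mulr0 ?add0r // ltnW.
have [d ->] : exists d, n = (k + d.+1)%N by exists (n - k.+1)%N; lia.
rewrite /qbinom !ifT; try lia.
rewrite subSS addKn (_ : (k + d.+1 - k.+1 = d)%N); last by lia.
have -> : (k + d.+1)%:Z - k%:Z = d.+1%:Z by lia.
rewrite !qfactS (_ : ((k + d.+1).+1 = k.+1 + d.+1)%N) ?exprD; last by lia.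
rewrite -[q ^ d.+1]/(q ^+ d.+1).
field; rewrite ?qfact_neq0 ?subr1qXn_neq0 //.
Qed.

Lemma expqzB a b : q ^ (a - b) = q ^ a / q ^ b.
Proof. by rewrite expqzD invr_expz. Qed.

Lemma qbinom_vandermonde a N n :
  \sum_(k < n.+1) q ^ (k%:Z * (k%:Z + N%:Z - n%:Z)) * qbinom a k * qbinom N (n - k)
  = qbinom (a + N) n.
Proof.
elim: a n => [|a IHa] n.
  rewrite big_ord_recl big1 => [|k _]; last by rewrite qbinom_gt ?mulr0 ?mul0r.
  by rewrite /= mul0r expr0z qbinom0 subn0 !mul1r addr0.
case: n => [|n]; first by rewrite big_ord1 /= mul0r expr0z !qbinom0 !mul1r.
rewrite big_ord_recl /= mul0r expr0z qbinom0 subn0 !mul1r.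
under eq_bigr => k _ do rewrite /bump /= add1n subSS qbinomSS mulrDr mulrDl.
rewrite big_split /= addrCA.
have -> : qbinom N n.+1 + \sum_(k < n.+1) q ^ (k.+1%:Z * (k.+1%:Z + N%:Z - n.+1%:Z)) *
    qbinom a k.+1 * qbinom N (n - k) = qbinom (a + N) n.+1.
  rewrite -IHa [RHS]big_ord_recl /= mul0r expr0z qbinom0 subn0 !mul1r.
  by congr (_ + _); apply: eq_bigr => k _; rewrite /bump /= add1n subSS.
have -> : \sum_(k < n.+1) q ^ (k.+1%:Z * (k.+1%:Z + N%:Z - n.+1%:Z)) *
    (q ^ (a%:Z - k%:Z) * qbinom a k) * qbinom N (n - k)
    = q ^ (a%:Z + N%:Z - n%:Z) * qbinom (a + N) n.
  rewrite -IHa mulr_sumr; apply: eq_bigr => k _.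
  by rewrite !mulrA -!expqzD; congr (q ^ _ * _ * _); lia.
by rewrite addSn qbinomSS; congr (q ^ _ * _ + _); lia.
Qed.

Lemma qPochhammer_binomial x n :
  qPochhammer x n = \sum_(m < n.+1) (-1) ^+ m * q ^ 'C(m, 2)%:Z * qbinom n m * x ^+ m.
Proof.
elim: n => [|n IHn]; first by rewrite qPochhammer0 big_ord1 qbinom0 /= !mul1r.
pose T n m := (-1) ^+ m * q ^ 'C(m, 2)%:Z * qbinom n m * x ^+ m.
have T_split (m : 'I_n.+1) : T n.+1 (lift ord0 m) = - (x * q ^+ n) * T n m + T n m.+1.
  rewrite /T lift0 qbinomSS.
  have -> : q ^ (n%:Z - m%:Z) = q ^+ n * q ^ 'C(m, 2)%:Z / q ^ 'C(m.+1, 2)%:Z.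
    by rewrite -[q ^+ n]/(q ^ n%:Z) -expqzD -expqzB binS bin1; congr (q ^ _); lia.
  rewrite !exprS; field; exact: expqz_neq0.
have sumT : \sum_(m < n.+1) T n m.+1 = \sum_(m < n.+1) T n m - T n 0.
  rewrite big_ord_recr /= {2}/T qbinom_gt // mulr0 mul0r addr0.
  by rewrite [in RHS]big_ord_recl /= addrC addKr.
change (qPochhammer x n = \sum_(m < n.+1) T n m) in IHn.
change (qPochhammer x n.+1 = \sum_(m < n.+2) T n.+1 m).
rewrite qPochhammerS IHn [RHS]big_ord_recl.
rewrite (eq_bigr _ (fun m _ => T_split m)) big_split /=.
by rewrite -mulr_sumr sumT /T /= !qbinom0; ring.
Qed.

Lemma qPochhammer_qVn n m : (m <= n)%N ->
  qPochhammer (q ^- n) m * qfact (n - m) = (-1) ^+ m * q ^ ('C(m, 2)%:Z - (n * m)%:Z) * qfact n.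
Proof.
elim: m => [|m IHm] le_mn.
  by rewrite qPochhammer0 subn0 muln0 subr0 expr0z !mul1r.
have [d def_n] : exists d, n = (m + d.+1)%N by exists (n - m.+1)%N; lia.
move: (IHm (ltnW le_mn)); rewrite (_ : (n - m = (n - m.+1).+1)%N); last by lia.
rewrite qPochhammerS qfactS (_ : (n - m.+1 = d)%N); last by lia.
have qmn : q ^- n * q ^+ m = q ^ (m%:Z - n%:Z) by rewrite expqzB mulrC.
have qmn_d : q ^ (m%:Z - n%:Z) * q ^+ d.+1 = 1.
  by rewrite -[q ^+ d.+1]/(q ^ d.+1%:Z) -expqzD (_ : _ + _ = 0) ?expr0z //; lia.
have -> : 1 - q ^- n * q ^+ m = - q ^ (m%:Z - n%:Z) * (1 - q ^+ d.+1).
  by rewrite qmn mulrBr mulr1 mulNr qmn_d opprK addrC.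
have -> : q ^ ('C(m.+1, 2)%:Z - (n * m.+1)%:Z) =
           q ^ (m%:Z - n%:Z) * q ^ ('C(m, 2)%:Z - (n * m)%:Z).
  by rewrite -expqzD binS bin1; congr (q ^ _); lia.
move=> IH; rewrite [(-1) ^+ _]exprS.
transitivity (- q ^ (m%:Z - n%:Z) * (qPochhammer (q ^- n) m * (qfact d * (1 - q ^+ d.+1)))).
  by ring.
by rewrite IH; ring.
Qed.

Lemma hexuE j i j' i' j'' i'' : (i' + j' = i'' + j)%N ->
  hexu j i j' i' j'' i'' =
  \sum_(m < (minn i i').+1) hexu_coef j' i' i'' j'' m * qbinom (i + j - m) j.
Proof.
move=> bal; rewrite /hexu mulr_sumr; apply: eq_bigr => -[m /=].
rewrite ltnS leq_min => /andP[le_mi le_mi'] _.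
have le_mij : (m <= i + j)%N by lia.
rewrite /hexu_coef /qbinom ifT; last by lia.
rewrite (_ : (i + j - m - j = i - m)%N); last by lia.
have qPochhammer_qVnE n : (m <= n)%N -> qPochhammer (q ^- n) m =
    (-1) ^+ m * q ^ ('C(m, 2)%:Z - (n * m)%:Z) * qfact n / qfact (n - m).
  by move=> le_mn; rewrite -qPochhammer_qVn ?mulfK ?qfact_neq0.
rewrite qPochhammer_q !qPochhammer_qVnE //.
have -> : q ^+ (m * j' + 'C(m.+1, 2)) =
    q ^ ('C(m, 2)%:Z - (i * m)%:Z) * q ^ ('C(m, 2)%:Z - (i' * m)%:Z) * q ^+ (m * (i'' + 1))
    / q ^ ('C(m, 2)%:Z - ((i + j) * m)%:Z).
  rewrite -[q ^+ (m * _)]/(q ^ (m * (i'' + 1))%N%:Z).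
  rewrite -[q ^+ (_ + _)]/(q ^ (m * j' + 'C(m.+1, 2))%N%:Z).
  rewrite -!expqzD -expqzB binS bin1; congr (q ^ _); lia.
by field; rewrite ?qfact_neq0 ?expqz_neq0 ?signr_eq0.
Qed.

Lemma hexu_coef_qbinom j j' i' i'' j'' k m :
  (k <= j)%N -> (k <= j'')%N -> (j <= k + i')%N -> (m <= i')%N ->
  hexu_coef j' i' i'' j'' m *
    (q ^ (k%:Z * (k%:Z + (i' - m)%N%:Z - j%:Z)) * qbinom j'' k * qbinom (i' - m) (j - k)) =
  q ^+ (k * (k + i' - j)) /
    (qfact k * qfact (k + i' - j) * qfact (j - k) * qfact (j'' - k) * qfact i'') *
  ((-1) ^+ m * q ^ 'C(m, 2)%:Z * qbinom (k + i' - j) m * (q ^ (j'%:Z - k%:Z + 1)) ^+ m).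
Proof.
move=> le_kj le_kj'' le_jki' le_mi'; set k' := (k + i' - j)%N.
have [lt_k'm | le_mk'] := ltnP k' m.
  rewrite [qbinom k' m]qbinom_gt // [qbinom (i' - m) _]qbinom_gt ?(mulr0, mul0r) //; lia.
rewrite /hexu_coef /qbinom !ifT; try lia.
rewrite (_ : (i' - m - (j - k) = k' - m)%N); last by lia.
have -> : q ^+ (m * j' + 'C(m.+1, 2)) = q ^+ (k * k') * q ^ 'C(m, 2)%:Z *
    (q ^ (j'%:Z - k%:Z + 1)) ^+ m / q ^ (k%:Z * (k%:Z + (i' - m)%N%:Z - j%:Z)).
  rewrite -[q ^+ (k * k')]/(q ^ (k * k')%N%:Z).
  rewrite (_ : (q ^ _) ^+ m = q ^ ((j'%:Z - k%:Z + 1) * m%:Z)); last exact: (exprz_exp q _ m).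
  rewrite -[q ^+ (_ + _)]/(q ^ (m * j' + 'C(m.+1, 2))%N%:Z) -!expqzD -expqzB binS bin1.
  congr (q ^ _); rewrite /k' !PoszD !PoszM (_ : (i' - m)%N%:Z = i'%:Z - m%:Z); last by lia.
  rewrite (_ : (k + i' - j)%N%:Z = k%:Z + i'%:Z - j%:Z); last by lia.
  ring.
by field; rewrite ?qfact_neq0 ?expqz_neq0 ?signr_eq0.
Qed.

Lemma sum_hexcoef j i j' i' j'' i'' N k : (k <= j)%N -> (i' < N)%N ->
  \sum_(l < N) hexcoef j i j' i' j'' i'' k l = hexcoef j i j' i' j'' i'' k (k + i' - j).
Proof.
move=> le_kj lt_i'N; have lt_k'N : (k + i' - j < N)%N by lia.
rewrite (bigD1 (Ordinal lt_k'N)) //= big1 ?addr0 // => l ne_lk'.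
rewrite /hexcoef ifF //; apply: (contraNF _ ne_lk') => /and4P[/eqP e _ _ _].
by rewrite -val_eqE /=; apply/eqP; lia.
Qed.

Lemma hexu_row j i j' i' j'' i'' k :
  (i' + j' = i'' + j)%N -> (i'' + j'' = i + j')%N -> (k <= j)%N ->
  \sum_(m < (minn i i').+1) hexu_coef j' i' i'' j'' m *
    (q ^ (k%:Z * (k%:Z + (i' - m)%N%:Z - j%:Z)) * qbinom j'' k * qbinom (i' - m) (j - k))
  = hexcoef j i j' i' j'' i'' k (k + i' - j).
Proof.
move=> bal1 bal2 le_kj; rewrite /hexcoef; set k' := (k + i' - j)%N.
have [/andP[le_kj'' le_jki'] | out] := boolP ((k <= j'') && (j <= k + i'))%N; last first.
  rewrite ifF; last first.
    by apply: (contraNF _ out) => /and4P[/eqP ? _ _]; rewrite !leq_min => /and3P[_ _]; lia.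
  apply: big1 => m _; have [lt_j''k | le_kj''] := ltnP j'' k.
    by rewrite qbinom_gt ?(mulr0, mul0r).
  by rewrite [qbinom (i' - m) _]qbinom_gt ?mulr0 //; lia.
set f := fun m : nat => (-1) ^+ m * q ^ 'C(m, 2)%:Z * qbinom k' m * (q ^ (j'%:Z - k%:Z + 1)) ^+ m.
rewrite (eq_bigr (fun m : 'I_(minn i i').+1 =>
  q ^+ (k * k') / (qfact k * qfact k' * qfact (j - k) * qfact (j'' - k) * qfact i'') * f m));
  last first.
  move=> m _; apply: hexu_coef_qbinom => //.
  by move: (ltn_ord m); rewrite ltnS leq_min => /andP[].
rewrite -mulr_sumr (@sum_ord_widen0 _ k'.+1); first last.
- by move=> m /andP[lt_k'm _]; rewrite /f qbinom_gt // mulr0 mul0r.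
- by rewrite ltnS leq_min; apply/andP; split; lia.
rewrite -qPochhammer_binomial.
have [le_kj' | lt_j'k] := leqP k j'.
  rewrite ifT; last by apply/and4P; split; rewrite ?leq_min; try apply/eqP; lia.
  have -> : q ^ (j'%:Z - k%:Z + 1) = q ^ (j' - k).+1%:Z by congr (q ^ _); lia.
  have := qPochhammer_qXS (j' - k) k'; rewrite (_ : (j' - k + k' = i'')%N); last by lia.
  move=> qP; rewrite -[qPochhammer _ _](mulKf (qfact_neq0 (j' - k))) qP.
  by field; rewrite ?qfact_neq0.
rewrite ifF; last by apply/negbTE/and4P => -[_ _ _]; rewrite !leq_min; lia.
rewrite (@qPochhammer_eq0 _ _ (k - j'.+1)) ?mulr0 //; first by lia.
by rewrite -[q ^+ _]/(q ^ (k - j'.+1)%N%:Z) -expqzD (_ : _ + _ = 0) ?expr0z //; lia.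
Qed.

Lemma hexu_hexsum N j i j' i' j'' i'' :
  (i' + j' = i'' + j)%N -> (i'' + j'' = i + j')%N -> (j < N)%N -> (i' < N)%N ->
  hexu j i j' i' j'' i'' = hexsum N j i j' i' j'' i''.
Proof.
move=> bal1 bal2 lt_jN lt_i'N; rewrite hexuE //.
have vandermonde (m : 'I_(minn i i').+1) : qbinom (i + j - m) j =
    \sum_(k < j.+1) q ^ (k%:Z * (k%:Z + (i' - m)%N%:Z - j%:Z)) *
      qbinom j'' k * qbinom (i' - m) (j - k).
  have : (m <= i')%N by move: (ltn_ord m); rewrite ltnS leq_min => /andP[].
  by move=> le_mi'; rewrite qbinom_vandermonde; congr qbinom; lia.
under eq_bigr => m _ do rewrite vandermonde mulr_sumr.
rewrite exchange_big /hexsum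
  (@sum_ord_widen0 _ j.+1 N (fun k => \sum_(l < N) hexcoef j i j' i' j'' i'' k l)) //.
  apply: eq_bigr => k _; have le_kj : (k <= j)%N by rewrite -ltnS.
  by rewrite sum_hexcoef // hexu_row.
move=> k /andP[lt_jk _]; apply: big1 => l _; rewrite /hexcoef ifF //.
by apply/negbTE/and4P => -[_ _ _]; rewrite !leq_min; lia.
Qed.

End QCalculus.

Lemma tq_neq0 : tq != 0.
Proof. by rewrite /tq -tofrac0 tofrac_eq polyX_eq0. Qed.

Lemma tqXn_neq1 n : (0 < n)%N -> tq ^+ n != 1.
Proof.
move=> n_gt0; rewrite /tq -tofracXn -tofrac1 tofrac_eq.
apply: (contraTneq _ n_gt0) => /(congr1 (fun p : {poly rat} => size p)).
by rewrite size_polyXn size_poly1 => -[->].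
Qed.

Theorem lemma3p2 (j i j' i' j'' i'' : nat) :
  (i'%:Z - j%:Z = i''%:Z - j'%:Z)%R ->
  (i''%:Z - j'%:Z = i%:Z - j''%:Z)%R ->
  [/\ u j i j' i' j'' i'' = u j' i' j'' i'' j i,
      u j i j' i' j'' i'' = u i j' i' j'' i'' j
    & u j i j' i' j'' i'' = u j'' i' j' i j i''].
Proof.
move=> bal1 bal2; set N := (j + i + j' + i' + j'' + i'').+1.
have u_hexsum a b c d e f : (d + c = f + a)%N -> (f + e = b + c)%N -> (a < N)%N -> (d < N)%N ->
    u a b c d e f = hexsum tq N a b c d e f.
  exact: (hexu_hexsum tq_neq0 tqXn_neq1).
rewrite !u_hexsum; try lia.
split; first by rewrite [RHS]hexsum_rot [RHS]hexsum_rot.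
  by rewrite [RHS]hexsum_rot.
by rewrite [RHS]hexsum_flip.
Qed.
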